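(* Let $u=u_1\cdots u_m$ be a quasi-strict pin word corresponding to a permutation $\pi$ and $w$ a strict pin word corresponding to a permutation $\sigma$. If $\phi(u_2\cdots u_m)$ is a factor of $\phi(w)$ beginning at a position $p\ge3$ (i.e. $\phi(w)=y\,\phi(u_2\cdots u_m)\,y'$ with $|y|\ge2$), then $\pi\le\sigma$.
   Context: Permutations of length $n$ are bijections of $\{1,\dots,n\}$, identified with their diagrams $\{(i,\sigma(i))\}$; $\pi\le\sigma$ means some subsequence of $\sigma$ is order isomorphic to $\pi$. Pins are points of $\mathbb{Z}^2$. A pin $p$ separates a set $P$ from a set $Q$ horizontally (resp. vertically) if the horizontal (resp. vertical) line through $p$ has $P$ strictly on one side and $Q$ strictly on the other. A pin sequence is a sequence $(p_1,\dots,p_k)$ of pins, no two in a common row or column, such that for every $i\ge2$, $p_i$ lies outside the bounding box of $\{p_1,\dots,p_{i-1}\}$ and either $p_i$ separates $p_{i-1}$ from $\{p_1,\dots,p_{i-2}\}$ or $p_i$ is independent from $\{p_1,\dots,p_{i-1}\}$. A pin representation of $\sigma$ is a pin sequence order isomorphic to its diagram. Pin words: given a pin representation $(p_1,\dots,p_n)$ and an origin $p_0$ such that $(p_0,\dots,p_n)$ is a pin sequence, each $p_i$ ($i\ge1$) is encoded by $U$ (resp. $D,L,R$) if $p_i$ separates $p_{i-1}$ from $\{p_0,\dots,p_{i-2}\}$ and lies above (resp. below, left of, right of) the bounding box of $\{p_0,\dots,p_{i-1}\}$, and by $1$ (resp. $2,3,4$) if $p_i$ is independent from $\{p_0,\dots,p_{i-1}\}$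 and lies in the up-right (resp. up-left, bottom-left, bottom-right) corner region of that bounding box. The word then corresponds to $\sigma$. Letters $1,2,3,4$ are numerals, $U,D,L,R$ directions. A strict pin word has length $\ge2$, a numeral first, then only directions; a quasi-strict pin word has length $\ge2$, two numerals first, then only directions. $\phi$ is defined on words consisting of a numeral followed by a nonempty word over $\{L,R,U,D\}$ alternating between $\{L,R\}$ and $\{U,D\}$, by $\phi(u'u'')=\varphi(u')u''$ for $|u'|=2$ with $\varphi$: $1R\mapsto RUR$, $2R\mapsto LUR$, $3R\mapsto LDR$, $4R\mapsto RDR$, $1L\mapsto RUL$, $2L\mapsto LUL$, $3L\mapsto LDL$, $4L\mapsto RDL$, $1U\mapsto URU$, $2U\mapsto ULU$, $3U\mapsto DLU$, $4U\mapsto DRU$, $1D\mapsto URD$, $2D\mapsto ULD$, $3D\mapsto DLD$, $4D\mapsto DRD$; on single numerals $\phi(1)=\{UR,RU\}$, $\phi(2)=\{UL,LU\}$, $\phi(3)=\{DL,LD\}$, $\phi(4)=\{RD,DR\}$ (for $m=2$ the hypothesis means some element of $\phi(u_2)$ occurs as stated). A factor is a contiguous subword; positions are numbered from $1$. *)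

From HB Require Import structures.
From mathcomp Require Import all_boot all_order all_algebra all_fingroup.
Set Implicit Arguments. Unset Strict Implicit. Unset Printing Implicit Defensive.
Import Order.TTheory GRing.Theory Num.Theory.

Definition pattern_le (k n : nat) (pi : 'S_k) (sigma : 'S_n) : Prop :=
  exists f : 'I_k -> 'I_n,
    (forall i j : 'I_k, i < j -> f i < f j) /\
    (forall i j : 'I_k, (pi i < pi j) = (sigma (f i) < sigma (f j))).

Definition pt := (int * int)%type.

Local Open Scope ring_scope.

Definition separates_h (p : pt) (P Q : seq pt) : bool :=
  (all (fun a => a.2 < p.2) P && all (fun b => p.2 < b.2) Q) ||
  (all (fun a => p.2 < a.2) P && all (fun b => b.2 < p.2) Q).

Definition separates_v (p : pt) (P Q : seq pt) : bool :=
  (all (fun a => a.1 < p.1) P && all (fun b => p.1 < b.1) Q) ||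
  (all (fun a => p.1 < a.1) P && all (fun b => b.1 < p.1) Q).

Definition separates (p : pt) (P Q : seq pt) : bool :=
  separates_h p P Q || separates_v p P Q.

Definition independent (p : pt) (P : seq pt) : bool :=
  ~~ (has (fun a => a.2 < p.2) P && has (fun a => p.2 < a.2) P) &&
  ~~ (has (fun a => a.1 < p.1) P && has (fun a => p.1 < a.1) P).

Definition in_bbox (p : pt) (P : seq pt) : bool :=
  [&& has (fun a => a.1 <= p.1) P, has (fun a => p.1 <= a.1) P,
      has (fun a => a.2 <= p.2) P & has (fun a => p.2 <= a.2) P].

Definition dflt_pt : pt := (0%:Z, 0%:Z).

Definition pin_seq (s : seq pt) : Prop :=
  (forall i j, (i < j < size s)%N ->
     ((nth dflt_pt s i).1 != (nth dflt_pt s j).1) &&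
     ((nth dflt_pt s i).2 != (nth dflt_pt s j).2)) /\
  (forall i, (1 <= i < size s)%N ->
     ~~ in_bbox (nth dflt_pt s i) (take i s) &&
     (separates (nth dflt_pt s i) [:: nth dflt_pt s i.-1] (take i.-1 s)
      || independent (nth dflt_pt s i) (take i s))).

Definition order_iso_diagram (n : nat) (s : seq pt) (sigma : 'S_n) : Prop :=
  size s = n /\
  exists f : 'I_n -> 'I_n, bijective f /\
    forall a b : 'I_n,
      ((nth dflt_pt s a).1 < (nth dflt_pt s b).1) = (f a < f b)%N /\
      ((nth dflt_pt s a).2 < (nth dflt_pt s b).2) = (sigma (f a) < sigma (f b))%N.

Definition pin_representation (n : nat) (s : seq pt) (sigma : 'S_n) : Prop :=
  pin_seq s /\ order_iso_diagram s sigma.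

Inductive letter := N1 | N2 | N3 | N4 | LU | LD | LL | LR.

Definition letter_to_nat (c : letter) : nat :=
  match c with N1 => 0 | N2 => 1 | N3 => 2 | N4 => 3
             | LU => 4 | LD => 5 | LL => 6 | LR => 7 end.
Definition nat_to_letter (k : nat) : letter :=
  match k with 0 => N1 | 1 => N2 | 2 => N3 | 3 => N4
             | 4 => LU | 5 => LD | 6 => LL | _ => LR end.
Lemma letter_natK : cancel letter_to_nat nat_to_letter.
Proof. by case. Qed.
HB.instance Definition _ := Equality.copy letter (can_type letter_natK).

Definition word := seq letter.

Definition is_numeral (c : letter) : bool :=
  match c with N1 | N2 | N3 | N4 => true | _ => false end.
Definition is_dir (c : letter) : bool := ~~ is_numeral c.
Definition is_LR (c : letter) : bool :=
  match c with LL | LR => true | _ => false end.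

(* Encoding of the pin q_i (i >= 1) of q = (p_0, p_1, ..., p_n) by letter c *)
Definition encodes_at (q : seq pt) (i : nat) (c : letter) : bool :=
  let p := nth dflt_pt q i in
  let S := take i q in
  let sep := separates p [:: nth dflt_pt q i.-1] (take i.-1 q) in
  let ind := independent p S in
  let above := all (fun a => a.2 < p.2) S in
  let below := all (fun a => p.2 < a.2) S in
  let right := all (fun a => a.1 < p.1) S in
  let left := all (fun a => p.1 < a.1) S in
  match c with
  | LU => sep && above
  | LD => sep && below
  | LL => sep && left
  | LR => sep && right
  | N1 => [&& ind, above & right]
  | N2 => [&& ind, above & left]
  | N3 => [&& ind, below & left]
  | N4 => [&& ind, below & right]
  end.

Definition corresponds (n : nat) (w : word) (sigma : 'S_n) : Prop :=
  size w = n /\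
  exists (p0 : pt) (ps : seq pt),
    pin_representation ps sigma /\ pin_seq (p0 :: ps) /\
    forall i, (1 <= i <= n)%N -> encodes_at (p0 :: ps) i (nth N1 w i.-1).

Definition strict_pin_word (w : word) : bool :=
  [&& (2 <= size w)%N, is_numeral (head N1 w) & all is_dir (behead w)].

Definition quasi_strict_pin_word (w : word) : bool :=
  [&& (2 <= size w)%N, is_numeral (nth N1 w 0), is_numeral (nth N1 w 1)
    & all is_dir (drop 2 w)].

Definition varphi (a b : letter) : option word :=
  match a, b with
  | N1, LR => Some [:: LR; LU; LR]
  | N2, LR => Some [:: LL; LU; LR]
  | N3, LR => Some [:: LL; LD; LR]
  | N4, LR => Some [:: LR; LD; LR]
  | N1, LL => Some [:: LR; LU; LL]
  | N2, LL => Some [:: LL; LU; LL]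
  | N3, LL => Some [:: LL; LD; LL]
  | N4, LL => Some [:: LR; LD; LL]
  | N1, LU => Some [:: LU; LR; LU]
  | N2, LU => Some [:: LU; LL; LU]
  | N3, LU => Some [:: LD; LL; LU]
  | N4, LU => Some [:: LD; LR; LU]
  | N1, LD => Some [:: LU; LR; LD]
  | N2, LD => Some [:: LU; LL; LD]
  | N3, LD => Some [:: LD; LL; LD]
  | N4, LD => Some [:: LD; LR; LD]
  | _, _ => None
  end.

Definition phi_numeral (c : letter) : seq word :=
  match c with
  | N1 => [:: [:: LU; LR]; [:: LR; LU]]
  | N2 => [:: [:: LU; LL]; [:: LL; LU]]
  | N3 => [:: [:: LD; LL]; [:: LL; LD]]
  | N4 => [:: [:: LR; LD]; [:: LD; LR]]
  | _ => [::]
  end.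

Definition alternating (s : word) : bool :=
  [&& s != [::], all is_dir s & sorted (fun a b => is_LR a != is_LR b) s].

(* phi w : the list of possible values of phi on w (empty when phi is
   undefined on w; a singleton for a numeral followed by an alternating
   direction word; the two-element set phi(c) for a single numeral c). *)
Definition pin_phi (w : word) : seq word :=
  match w with
  | [::] => [::]
  | [:: c] => phi_numeral c
  | c :: d :: rest =>
      if is_numeral c && alternating (d :: rest) then
        match varphi c d with
        | Some v => [:: v ++ rest]
        | None => [::]
        end
      else [::]
  end.

From HB Require Import structures.
From mathcomp Require Import all_boot all_order all_algebra all_fingroup.
From mathcomp Require Import zify.
Set Implicit Arguments. Unset Strict Implicit. Unset Printing Implicit Defensive.
Import Order.TTheory GRing.Theory Num.Theory.
Local Open Scope ring_scope.

(* Write phi(w) = y phi(u_2 ... u_m) y' with |y| = k >= 2. Then w_k w_(k+1) is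
   the corner pair by which phi replaces the numeral u_2, and w_(k+j-1) = u_j for
   j >= 3. Send pin 1 of u to pin k-1 of w and pin j >= 2 of u to pin k+j-1 of w.
   A pin encoded by a direction d lies beyond all earlier pins in direction d and
   separates its predecessor from them; so if the predecessor is extremal in a
   perpendicular direction e, the position of the new pin relative to any earlier
   pin is fixed by d, e and whether that pin is the predecessor. These data agree
   in u and w along the embedding, and for the first pair both pin 2 of u (seen
   from pin 1) and pin k+1 of w (seen from pin k-1) lie in the corner of u_2.
   Hence the embedding preserves both coordinate orders. *)

Definition coord (d : letter) (p : pt) : int := if is_LR d then p.1 else p.2.

Definition beyond (d : letter) (p r : pt) : bool :=
  if (d == LR) || (d == LU) then coord d p < coord d r else coord d r < coord d p.

Definition opp_dir (d : letter) : letter :=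
  match d with LU => LD | LD => LU | LL => LR | LR => LL | c => c end.

Definition perpendicular (d e : letter) : bool :=
  [&& is_dir d, is_dir e & is_LR d != is_LR e].

Definition extremal (q : seq pt) (i : nat) (d : letter) : bool :=
  all (beyond d ^~ (nth dflt_pt q i)) (take i q).

Definition same_quadrant (p r p' r' : pt) : Prop :=
  [/\ (p.1 < r.1) = (p'.1 < r'.1), (p.2 < r.2) = (p'.2 < r'.2),
      (r.1 < p.1) = (r'.1 < p'.1) & (r.2 < p.2) = (r'.2 < p'.2)].

Lemma beyond_opp d p r : is_dir d -> beyond (opp_dir d) p r = beyond d r p.
Proof. by case: d. Qed.

Lemma perpendicularC d e : perpendicular d e = perpendicular e d.
Proof. by case: d; case: e. Qed.

Lemma perpendicular_opp d e : perpendicular d e -> perpendicular d (opp_dir e).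
Proof. by case: d; case: e. Qed.

Lemma beyond2_same_quadrant d e p r p' r' : perpendicular d e ->
  beyond d p r -> beyond e p r -> beyond d p' r' -> beyond e p' r' ->
  same_quadrant p r p' r'.
Proof.
case: d; case: e => //= _; rewrite /beyond /coord /= => h1 h2 h3 h4;
by split; apply/idP/idP; lia.
Qed.

Lemma separating_beyond d e p r Q : Q != [::] -> perpendicular d e ->
  separates p [:: r] Q -> all (beyond d ^~ p) (r :: Q) ->
  all (beyond e ^~ r) Q -> beyond e p r && all (beyond e ^~ p) Q.
Proof.
case: Q => [//|z Q] _; rewrite /separates /separates_h /separates_v /= !andbT.
case: d; case: e => //= _;
rewrite /beyond /coord /= => /orP[/orP[]|/orP[]] /and3P[h1 h2 h3]
  /and3P[h4 h5 h6] /andP[h7 h8]; rewrite ?h1 ?h2 ?h3 ?andbT /=; lia.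
Qed.

Lemma encodes_dir q i d : is_dir d -> encodes_at q i d ->
  separates (nth dflt_pt q i) [:: nth dflt_pt q i.-1] (take i.-1 q) &&
  extremal q i d.
Proof. by case: d. Qed.

Lemma phi_numeral_perpendicular c a b :
  [:: a; b] \in phi_numeral c -> perpendicular a b.
Proof. by case: c; rewrite //= !inE => /orP[] /eqP[-> ->]. Qed.

Lemma encodes_numeral q i c a b : [:: a; b] \in phi_numeral c ->
  encodes_at q i c -> extremal q i a && extremal q i b.
Proof.
by case: c; rewrite //= !inE => /orP[] /eqP[-> ->] /and3P[_ h1 h2]; apply/andP.
Qed.

Lemma extremal_next q i d e : (0 < i)%N -> (i.+1 < size q)%N ->
  perpendicular d e -> encodes_at q i.+1 d -> extremal q i e ->
  forall j, (j <= i)%N ->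
    beyond d (nth dflt_pt q j) (nth dflt_pt q i.+1) &&
    beyond (if j == i then opp_dir e else e) (nth dflt_pt q j) (nth dflt_pt q i.+1).
Proof.
move=> i_gt0 lt_iq de; have /and3P[dir_d dir_e _] := de.
move=> /(encodes_dir dir_d) /andP[sep ext_d] ext_e j le_ji.
have take_rcons : take i.+1 q = rcons (take i q) (nth dflt_pt q i).
  by rewrite (take_nth dflt_pt) //; apply: ltnW.
have take_pin k : (k <= i)%N -> nth dflt_pt q k \in take i.+1 q.
  move=> le_ki; rewrite -(nth_take dflt_pt (_ : k < i.+1)%N) ?ltnS //.
  by rewrite mem_nth // size_takel //; apply: ltnW.
have take_nil : take i q != [::].
  by rewrite -size_eq0 -lt0n size_takel // ltnW // ltnW.
move: (ext_d); rewrite /extremal take_rcons all_rcons => /andP[ext_di ext_dQ].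
have /andP[ei eQ] :=
  separating_beyond take_nil de sep (introT andP (conj ext_di ext_dQ)) ext_e.
rewrite (allP ext_d _ (take_pin j le_ji)) /=.
case: eqP => [->|ne_ji]; first by rewrite beyond_opp.
have lt_ji : (j < i)%N by rewrite ltn_neqAle le_ji andbT; apply/eqP.
apply: (allP eQ); rewrite -(nth_take dflt_pt lt_ji) mem_nth //.
by rewrite size_takel // ltnW // ltnW.
Qed.

Lemma varphi_corner c d t : varphi c d = Some t ->
  exists a b, t = [:: a; b; d] /\ [:: a; b] \in phi_numeral c.
Proof. by case: c; case: d => // -[<-]; do 2 eexists; split; first reflexivity. Qed.

Lemma pin_phi_quasi_strict u v :
  quasi_strict_pin_word u -> v \in pin_phi (behead u) ->
  exists a b, [:: a; b] \in phi_numeral (nth N1 u 1) /\ v = [:: a, b & drop 2 u].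
Proof.
case: u => [|c1 [|c [|d s]]] //= _.
  move=> v_in; have: size v = 2 by case: c v_in => //=; rewrite !inE => /orP[] /eqP->.
  by case: v v_in => [|a [|b []]] // v_in _; exists a, b.
case: ifP => // _; case E: (varphi c d) => [t|] //; rewrite inE => /eqP->.
by have [a [b [-> ab]]] := varphi_corner E; exists a, b.
Qed.

Lemma pin_phi_strict w v : strict_pin_word w -> v \in pin_phi w ->
  alternating (behead w) /\ exists a b, v = [:: a, b & behead w].
Proof.
case: w => [|c [|d s]] //= _.
case: ifP => // /andP[_ alt]; case E: (varphi c d) => [t|] //.
rewrite inE => /eqP->; split=> //.
by have [a [b [-> _]]] := varphi_corner E; exists a, b.
Qed.

Lemma factor_drop2 (T : Type) (a b : T) s y t y' : (2 <= size y)%N ->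
  [:: a, b & s] = y ++ t ++ y' -> s = drop 2 y ++ t ++ y'.
Proof. by case: y => [|a' [|b' y]] //= _ [_ _ ->]; rewrite drop0. Qed.

Lemma encodes_drop d q w :
  (forall i, (1 <= i <= size w)%N -> encodes_at q i (nth N1 w i.-1)) ->
  forall t, (t < size (drop d w))%N -> encodes_at q (d + t).+1 (nth N1 (drop d w) t).
Proof. by move=> enc t; rewrite size_drop nth_drop => lt_t; apply: enc; lia. Qed.

Lemma pattern_le_of_quadrants k n (pi : 'S_k) (sigma : 'S_n) (s t : seq pt)
    (G : nat -> nat) :
  order_iso_diagram s pi -> order_iso_diagram t sigma ->
  (forall i, (i < k)%N -> (G i < n)%N) ->
  (forall i j, (i < j < k)%N ->
     same_quadrant (nth dflt_pt s i) (nth dflt_pt s j)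
                   (nth dflt_pt t (G i)) (nth dflt_pt t (G j))) ->
  pattern_le pi sigma.
Proof.
move=> [_ [fs [[fs' _ fs'K] iso_s]]] [_ [ft [_ iso_t]]] G_lt G_quad.
pose G' (i : 'I_k) : 'I_n := Ordinal (G_lt i (ltn_ord i)).
have quad (i j : 'I_k) :
    ((nth dflt_pt s i).1 < (nth dflt_pt s j).1) =
      ((nth dflt_pt t (G' i)).1 < (nth dflt_pt t (G' j)).1) /\
    ((nth dflt_pt s i).2 < (nth dflt_pt s j).2) =
      ((nth dflt_pt t (G' i)).2 < (nth dflt_pt t (G' j)).2).
  case: (ltngtP i j) => [lt_ij|lt_ji|/val_inj->]; last by rewrite !ltxx.
    by have [-> -> _ _] := G_quad i j (introT andP (conj lt_ij (ltn_ord j))).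
  by have [_ _ -> ->] := G_quad j i (introT andP (conj lt_ji (ltn_ord i))).
exists (fun i => ft (G' (fs' i))); split=> i j.
  move=> lt_ij; have := (iso_s (fs' i) (fs' j)).1.
  by rewrite !fs'K lt_ij (quad _ _).1 (iso_t _ _).1.
by have := (iso_s (fs' i) (fs' j)).2; rewrite !fs'K (quad _ _).2 (iso_t _ _).2.
Qed.

Lemma alternating_perpendicular s i : alternating s -> (i.+1 < size s)%N ->
  perpendicular (nth N1 s i) (nth N1 s i.+1).
Proof.
move=> /and3P[_ /allP dir_s /(sortedP N1) alt] lt_is.
by rewrite /perpendicular alt // !dir_s // mem_nth // ltnW.
Qed.

Lemma alternating_dir s i : alternating s -> (i < size s)%N -> is_dir (nth N1 s i).
Proof. by move=> /and3P[_ /allP dir_s _] lt_is; rewrite dir_s // mem_nth. Qed.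

(* Pin [j] of [u] goes to pin [embed_index (k - 2) j] of [w]. *)
Definition embed_index (h j : nat) : nat := if j == 1%N then h.+1 else (h + j).+1.

Lemma embed_index12 h : embed_index h 2 = (embed_index h 1).+2.
Proof. by rewrite /embed_index addn2. Qed.

Lemma embed_indexS h j : (2 <= j)%N -> embed_index h j.+1 = (embed_index h j).+1.
Proof. by rewrite /embed_index; case: (j =P 1); case: (j.+1 =P 1); lia. Qed.

Lemma leq_embed_index h i j : (1 <= i <= j)%N ->
  (embed_index h i <= embed_index h j)%N.
Proof. by rewrite /embed_index; case: (i =P 1); case: (j =P 1); lia. Qed.

Lemma embed_index_ge h j : (j <= embed_index h j)%N.
Proof. by rewrite /embed_index; case: (j =P 1); lia. Qed.

Lemma eq_embed_index h i j : (1 <= i)%N -> (1 <= j)%N ->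
  (embed_index h i == embed_index h j) = (i == j).
Proof.
by rewrite /embed_index; case: (i =P 1); case: (j =P 1) => ? ? ? ?; apply/eqP/eqP; lia.
Qed.

Section PinWordEmbedding.

Variables (p0u p0w : pt) (psu psw : seq pt) (c a b : letter) (su sw x x' : word).

Local Notation qu := (p0u :: psu).
Local Notation qw := (p0w :: psw).
Local Notation g := (embed_index (size x)).
(* [sw] is [w] without its numeral, so pin [i >= 2] of [w] is encoded by [wdir i]. *)
Local Notation wdir i := (nth N1 sw (i - 2)).

Hypothesis size_psu : size psu = (size su).+2.
Hypothesis size_psw : size psw = (size sw).+1.
Hypothesis corner_ab : [:: a; b] \in phi_numeral c.
Hypothesis alternating_sw : alternating sw.
Hypothesis sw_factor : sw = x ++ [:: a, b & su ++ x'].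
Hypothesis encodes_u2 : encodes_at qu 2 c.
Hypothesis encodes_u :
  forall t, (t < size su)%N -> encodes_at qu (2 + t).+1 (nth N1 su t).
Hypothesis encodes_w :
  forall t, (t < size sw)%N -> encodes_at qw (1 + t).+1 (nth N1 sw t).

Lemma embed_index_bound j : (j <= size psu)%N -> (g j <= size psw)%N.
Proof.
rewrite size_psu size_psw sw_factor size_cat /= size_cat /embed_index.
by case: eqP; lia.
Qed.

Lemma nth_sw_factor t : nth N1 sw (size x + t) = nth N1 [:: a, b & su ++ x'] t.
Proof. by rewrite sw_factor nth_cat ltnNge leq_addr addKn. Qed.

Lemma wdir_embed1 : wdir (g 1).+1 = a.
Proof.
rewrite /embed_index /= (_ : (size x).+2 - 2 = size x + 0)%N; last by lia.
by rewrite nth_sw_factor.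
Qed.

Lemma wdir_embed2 : wdir (g 2) = b.
Proof.
rewrite /embed_index /= (_ : (size x + 2).+1 - 2 = size x + 1)%N; last by lia.
by rewrite nth_sw_factor.
Qed.

Lemma wdir_embed j : (3 <= j <= size psu)%N -> wdir (g j) = nth N1 su (j - 3).
Proof.
move=> /andP[le3j le_j]; rewrite /embed_index ifN; last by apply/eqP; lia.
have -> : ((size x + j).+1 - 2 = size x + (j - 3).+2)%N by lia.
by rewrite nth_sw_factor /= nth_cat ifT // -ltnS -ltnS -size_psu; lia.
Qed.

Lemma encodes_wdir i : (2 <= i <= size psw)%N -> encodes_at qw i (wdir i).
Proof.
move=> le_i; have lt_i : (i - 2 < size sw)%N by lia.
by have := encodes_w lt_i; rewrite (_ : (1 + (i - 2)).+1 = i) //; lia.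
Qed.

Lemma extremal_w i : (2 <= i <= size psw)%N -> extremal qw i (wdir i).
Proof.
move=> le_i; have lt_i : (i - 2 < size sw)%N by lia.
have dir_i := alternating_dir alternating_sw lt_i.
by have /andP[] := encodes_dir dir_i (encodes_wdir le_i).
Qed.

Lemma perpendicular_wdir i : (2 <= i < size psw)%N ->
  perpendicular (wdir i) (wdir i.+1).
Proof.
move=> lt_i; rewrite (_ : i.+1 - 2 = (i - 2).+1)%N; last by lia.
by apply: alternating_perpendicular => //; lia.
Qed.

Lemma encodes_u_embed j : (3 <= j <= size psu)%N -> encodes_at qu j (wdir (g j)).
Proof.
move=> le_j; rewrite wdir_embed //; have lt_j : (j - 3 < size su)%N by lia.
by have := encodes_u lt_j; rewrite (_ : (2 + (j - 3)).+1 = j) //; lia.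
Qed.

Lemma extremal_u j : (2 <= j <= size psu)%N -> extremal qu j (wdir (g j)).
Proof.
case/andP; rewrite leq_eqVlt => /orP[/eqP<- _|le3j le_j].
  by rewrite wdir_embed2; case/andP: (encodes_numeral corner_ab encodes_u2).
have le_j' : (3 <= j <= size psu)%N by rewrite le3j.
have le_gj : (2 <= g j <= size psw)%N.
  by rewrite embed_index_bound // andbT /embed_index; case: eqP; lia.
have dir_gj : is_dir (wdir (g j)).
  by apply: alternating_dir alternating_sw _; lia.
by have /andP[] := encodes_dir dir_gj (encodes_u_embed le_j').
Qed.

Lemma same_quadrant_embed12 :
  same_quadrant (nth dflt_pt qu 1) (nth dflt_pt qu 2)
                (nth dflt_pt qw (g 1)) (nth dflt_pt qw (g 2)).
Proof.
have ab := phi_numeral_perpendicular corner_ab.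
have /andP[ext_a ext_b] := encodes_numeral corner_ab encodes_u2.
have lt_1u : (1 < size qu)%N by rewrite /= size_psu.
have pin1 : nth dflt_pt qu 1 \in take 2 qu.
  by rewrite (take_nth dflt_pt lt_1u) mem_rcons mem_head.
have le_g2 : ((g 1).+2 <= size psw)%N.
  by rewrite -embed_index12 embed_index_bound // size_psu.
have enc_b : encodes_at qw (g 1).+2 b.
  by rewrite -wdir_embed2 embed_index12; apply: encodes_wdir; rewrite le_g2.
have ext_wa : extremal qw (g 1).+1 a.
  by rewrite -wdir_embed1; apply: extremal_w; rewrite (ltnW le_g2).
have lt_g2 : ((g 1).+2 < size qw)%N by [].
have /andP[wb wa] := extremal_next (ltn0Sn _) lt_g2 (etrans (perpendicularC _ _) ab)
  enc_b ext_wa (leqnSn (g 1)).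
rewrite ltn_eqF // in wa.
rewrite embed_index12; apply: (beyond2_same_quadrant ab _ _ wa wb).
  exact: (allP ext_a _ pin1).
exact: (allP ext_b _ pin1).
Qed.

Lemma same_quadrant_embed i j : (1 <= i < j)%N -> (3 <= j <= size psu)%N ->
  same_quadrant (nth dflt_pt qu i) (nth dflt_pt qu j)
                (nth dflt_pt qw (g i)) (nth dflt_pt qw (g j)).
Proof.
case: j => [//|l]; rewrite !ltnS => /andP[le1i le_il] /andP[le2l le_l].
have g_l1 : g l.+1 = (g l).+1 := embed_indexS _ le2l.
have le_gl : ((g l).+1 <= size psw)%N by rewrite -g_l1 embed_index_bound.
have le2_gl : (2 <= g l)%N := leq_trans le2l (embed_index_ge _ _).
have de : perpendicular (wdir (g l.+1)) (wdir (g l)).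
  by rewrite perpendicularC g_l1; apply: perpendicular_wdir; rewrite le2_gl.
have enc_u := encodes_u_embed (introT andP (conj le2l le_l)).
have ext_u := extremal_u (introT andP (conj le2l (ltnW le_l))).
have enc_w : encodes_at qw (g l).+1 (wdir (g l.+1)).
  by rewrite -g_l1; apply: encodes_wdir; rewrite g_l1 le_gl ltnW.
have ext_w := extremal_w (introT andP (conj le2_gl (ltnW le_gl))).
have /andP[ud ue] :=
  extremal_next (q := qu) (ltnW le2l) le_l de enc_u ext_u le_il.
have /andP[wd we] := extremal_next (q := qw) (ltnW le2_gl) le_gl de enc_w ext_w
  (leq_embed_index _ (introT andP (conj le1i le_il))).
rewrite eq_embed_index ?(leq_trans le1i le_il) // in we.
rewrite g_l1; apply: (beyond2_same_quadrant _ ud ue wd we).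
by case: (i == l); rewrite ?perpendicular_opp.
Qed.

Lemma pin_embedding : exists G : nat -> nat,
  (forall i, (i < size psu)%N -> (G i < size psw)%N) /\
  (forall i j, (i < j < size psu)%N ->
     same_quadrant (nth dflt_pt psu i) (nth dflt_pt psu j)
                   (nth dflt_pt psw (G i)) (nth dflt_pt psw (G j))).
Proof.
have nth_qw j : nth dflt_pt psw (g j).-1 = nth dflt_pt qw (g j).
  by rewrite /embed_index; case: (j == 1%N).
exists (fun i => (g i.+1).-1); split=> [i lt_i | i j /andP[lt_ij lt_j]].
  have := embed_index_bound lt_i; rewrite /embed_index; case: (i.+1 =P 1); lia.
rewrite !nth_qw; case: j lt_ij lt_j => [//|[|j]] lt_ij lt_j.
  by case: i lt_ij => [|//] _; apply: same_quadrant_embed12.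
by apply: (@same_quadrant_embed i.+1 j.+3); rewrite ?ltnS.
Qed.

End PinWordEmbedding.

Theorem lemma9 (m n : nat) (u w : word) (pi : 'S_m) (sigma : 'S_n) :
  quasi_strict_pin_word u -> corresponds u pi ->
  strict_pin_word w -> corresponds w sigma ->
  (exists (v v' y y' : word),
      v \in pin_phi (behead u) /\ v' \in pin_phi w /\
      v' = y ++ v ++ y' /\ (2 <= size y)%N) ->
  pattern_le pi sigma.
Proof.
move=> qs_u [size_u [p0u [psu [[_ iso_u] [_ enc_u]]]]]
       s_w [size_w [p0w [psw [[_ iso_w] [_ enc_w]]]]]
       [v [v' [y [y' [phi_u [phi_w [v'_eq size_y]]]]]]].
have [a [b [corner_ab v_eq]]] := pin_phi_quasi_strict qs_u phi_u.
have [alt_w [a' [b' v'_def]]] := pin_phi_strict s_w phi_w.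
move: v'_eq; rewrite v'_def v_eq => /(factor_drop2 size_y) sw_factor.
have /and4P[le2u _ _ _] := qs_u; have /and3P[le2w _ _] := s_w.
have size_psu : size psu = (size (drop 2%N u)).+2.
  by rewrite size_drop iso_u.1 -size_u; lia.
have size_psw : size psw = (size (behead w)).+1.
  by rewrite size_behead iso_w.1 -size_w; lia.
rewrite -size_u in enc_u; rewrite -size_w in enc_w.
have enc_sw := encodes_drop (d := 1%N) enc_w; rewrite drop1 in enc_sw.
have [G [G_lt G_quad]] :=
  pin_embedding size_psu size_psw corner_ab alt_w sw_factor
    (enc_u 2%N le2u) (encodes_drop (d := 2%N) enc_u) enc_sw.
apply: (pattern_le_of_quadrants iso_u iso_w (G := G)).
  by rewrite -iso_u.1 -iso_w.1.
by rewrite -iso_u.1.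
Qed.
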